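(* Fix two disjoint sets of vertices $S_1,S_2\subseteq V_n$. Let $T$ be a uniformly random spanning tree of $K_n$. Then the random graphs $H_1 = \left(S_1, E(T)\cap \binom{S_1}{2}\right)$ and $H_2 = \left(S_2, E(T)\cap \binom{S_2}{2}\right)$ are independent.
   Context: $K_n$ is the complete graph on vertex set $V_n=\{v_1,\dots,v_n\}$; $\binom{S}{2}$ denotes the set of 2-element subsets of $S$. *)

From mathcomp Require Import all_boot all_order all_algebra.
Set Implicit Arguments. Unset Strict Implicit. Unset Printing Implicit Defensive.
Import GRing.Theory Num.Theory.

(* Vertices of K_n: 'I_n.  Edges: 2-element subsets of 'I_n.
   A (spanning sub)graph of K_n is given by its edge set E : {set {set 'I_n}}. *)

Definition binom2 (n : nat) (S : {set 'I_n}) : {set {set 'I_n}} :=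
  [set e : {set 'I_n} | (e \subset S) && (#|e| == 2)].

Definition Kedges (n : nat) : {set {set 'I_n}} := binom2 [set: 'I_n].

Definition adj (n : nat) (E : {set {set 'I_n}}) : rel 'I_n :=
  fun x y => (x != y) && ([set x; y] \in E).

Definition connectedb (n : nat) (E : {set {set 'I_n}}) : bool :=
  [forall x : 'I_n, forall y : 'I_n, connect (adj E) x y].

(* acyclic: no cycle v_0 v_1 ... v_{k-1} v_0 of k >= 3 distinct vertices.
   A list of distinct vertices has length at most n, so k ranges over 'I_(n.+1). *)
Definition acyclicb (n : nat) (E : {set {set 'I_n}}) : bool :=
  [forall k : 'I_n.+1, forall t : k.-tuple 'I_n,
     ~~ [&& 2 < k, uniq t & cycle (adj E) t]].

Definition spanning_trees (n : nat) : {set {set {set 'I_n}}} :=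
  [set T : {set {set 'I_n}} | [&& T \subset Kedges n, connectedb T & acyclicb T]].

Definition Pr_ust (n : nat) (A : pred {set {set 'I_n}}) : rat :=
  (#|[set T in spanning_trees n | A T]|%:R / #|spanning_trees n|%:R)%R.

(* If F is a forest in K_n whose k components have sizes a_1, ..., a_k, the
   number N(F) of spanning trees containing F satisfies N(F) n^2 = n^k a_1...a_k;
   this is proved by induction on k, double counting the pairs (T, e) with e an
   edge of T outside F.  For forests G_1, G_2 spanned by disjoint vertex sets
   S_1, S_2, the non-trivial components of G_1 ∪ G_2 are those of G_1 and of G_2,
   so the formula gives N(G_1 ∪ G_2) N(∅) = N(G_1) N(G_2): the events "G_1 ⊆ T"
   and "G_2 ⊆ T" are independent.  Möbius inversion on the subset lattice writes
   the event "T ∩ binom(S_i, 2) = F_i" as a signed sum of such containment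
   events, so the independence carries over to H_1 and H_2. *)

From mathcomp Require Import all_boot all_order all_algebra.
From mathcomp Require Import ring zify.
Set Implicit Arguments. Unset Strict Implicit. Unset Printing Implicit Defensive.
Import GRing.Theory Num.Theory.

Lemma connect_ind (T : finType) (e : rel T) (P : T -> Prop) x :
  P x -> (forall u v, P u -> e u v -> P v) -> forall y, connect e x y -> P y.
Proof.
move=> Px step y /connectP[p pp ->]; elim: p x Px pp => //= z p IH x Px.
by case/andP=> exz pz; apply: IH (step _ _ Px exz) pz.
Qed.

Section Graph.
Variable n : nat.
Implicit Types (F G : {set {set 'I_n}}) (x y u v : 'I_n).

Lemma adj_sym F : symmetric (adj F).
Proof. by move=> x y; rewrite /adj eq_sym setUC. Qed.

Lemma connect_adj_sym F : connect_sym (adj F).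
Proof. exact/sym_connect_sym/adj_sym. Qed.

Lemma adjS F G : F \subset G -> subrel (adj F) (adj G).
Proof. by move=> FG x y /andP[xy /(subsetP FG) xyG]; rewrite /adj xy xyG. Qed.

Lemma connect_adjS F G : F \subset G -> subrel (connect (adj F)) (connect (adj G)).
Proof. by move=> FG; apply: connect_sub => x y /(adjS FG)/connect1. Qed.

Lemma set2_inj x y u v :
  [set u; v] = [set x; y] -> (u = x /\ v = y) \/ (u = y /\ v = x).
Proof.
move=> uv_xy.
have: y \in [set u; v] by rewrite uv_xy set22.
have: x \in [set u; v] by rewrite uv_xy set21.
have: v \in [set x; y] by rewrite -uv_xy set22.
have: u \in [set x; y] by rewrite -uv_xy set21.
rewrite !in_set2 => /orP[]/eqP-> /orP[]/eqP-> /orP[]/eqP ? /orP[]/eqP ?;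
  by subst; auto.
Qed.

Lemma connect_setU1 F x y u v :
  connect (adj (F :|: [set [set x; y]])) u v =
  [|| connect (adj F) u v,
      connect (adj F) u x && connect (adj F) y v |
      connect (adj F) u y && connect (adj F) x v].
Proof.
set G := F :|: _; have FG : F \subset G by apply: subsetUl.
have Gxy : connect (adj G) x y.
  have [->|nxy] := eqVneq x y; first exact: connect0.
  by apply: connect1; rewrite /adj nxy in_setU in_set1 eqxx orbT.
apply/idP/idP; last first.
  case/or3P=> [/(connect_adjS FG)//|/andP[ux yv]|/andP[uy xv]].
    by rewrite (connect_trans (connect_adjS FG ux)) // (connect_trans Gxy) ?(connect_adjS FG).
  rewrite (connect_trans (connect_adjS FG uy)) // (connect_trans _ (connect_adjS FG xv)) //.
  by rewrite connect_adj_sym.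
move: v; apply: connect_ind; first by rewrite connect0.
move=> a b Ha /andP[ab]; rewrite in_setU in_set1.
case/orP=> [abF|/eqP/set2_inj[[? ?]|[? ?]]]; subst.
- have Fab : connect (adj F) a b by apply: connect1; rewrite /adj ab abF.
  have tr c : connect (adj F) c a -> connect (adj F) c b by move/connect_trans; apply.
  by case/or3P: Ha => [/tr->//|/andP[-> /tr->]|/andP[-> /tr->]]; rewrite ?orbT.
- by case/or3P: Ha => [h|/andP[h _]|/andP[h _]]; rewrite h ?connect0 ?orbT.
- by case/or3P: Ha => [h|/andP[h _]|/andP[h _]]; rewrite h ?connect0 ?orbT.
Qed.

Lemma acyclicP F :
  reflect (forall s, 2 < size s -> uniq s -> ~~ cycle (adj F) s) (acyclicb F).
Proof.
apply: (iffP forallP) => [hF s s_gt2 s_uniq | hF k].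
  have s_small : size s < n.+1.
    by rewrite ltnS -(card_uniqP s_uniq) (leq_trans (max_card _)) ?card_ord.
  by have := forallP (hF (Ordinal s_small)) (in_tuple s); rewrite /= s_gt2 s_uniq.
apply/forallP => t; apply/negP => /and3P[k_gt2 t_uniq t_cycle].
by have := hF t; rewrite size_tuple k_gt2 t_uniq t_cycle => /(_ isT isT).
Qed.

Lemma acyclicS F G : F \subset G -> acyclicb G -> acyclicb F.
Proof.
move=> FG /acyclicP hG; apply/acyclicP => s s_gt2 s_uniq.
by apply: contra (hG s s_gt2 s_uniq); apply: sub_cycle; apply: adjS.
Qed.

Lemma connect_not_acyclic_setU1 F x y :
  x != y -> connect (adj F) x y -> [set x; y] \notin F ->
  ~~ acyclicb (F :|: [set [set x; y]]).
Proof.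
move=> xy /connectP[p Fp y_last] xyF; subst y; move: xy xyF.
case: (shortenP Fp) => q Fq q_uniq _ xy xyF.
have q_gt2 : 2 < size (x :: q).
  case: q Fq {q_uniq} xy xyF => [|z [|w q]] //=; first by move=> _; rewrite eqxx.
  by rewrite andbT /adj => /andP[_ ->].
apply/negP => /acyclicP /(_ _ q_gt2 q_uniq) /negP; apply.
rewrite /= rcons_path (sub_path (adjS (subsetUl _ _)) Fq) /=.
by rewrite /adj eq_sym xy in_setU in_set1 setUC eqxx orbT.
Qed.

Lemma acyclic_bridgeP F :
  reflect (forall x y, x != y -> [set x; y] \in F ->
             ~~ connect (adj (F :\ [set x; y])) x y)
          (acyclicb F).
Proof.
apply: (iffP idP) => [hF x y xy xyF | hF].
  apply: contraL hF => Fxy; rewrite -(setD1K xyF) setUC.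
  by apply: connect_not_acyclic_setU1; rewrite // !inE eqxx.
apply/acyclicP => -[|a [|b p]] // s_gt2 s_uniq.
apply/negP; rewrite /= rcons_path => /and3P[/andP[ab abF] pb la].
apply: (negP (hF a b ab abF)).
rewrite connect_adj_sym; apply/connectP; exists (rcons p a); last by rewrite last_rcons.
move: s_uniq; rewrite /= !inE negb_or => /andP[/andP[_ a_p] /andP[b_p _]].
have ab_new c d : c != d -> c != a -> d != a -> [set c; d] != [set a; b].
  by move=> cd ca da; apply/eqP => /set2_inj[[/eqP] | [_ /eqP]]; rewrite ?(negbTE ca) ?(negbTE da).
have p_a : all (fun z => z != a) (b :: p).
  by apply/allP => z /[!inE] /orP[/eqP-> | zp]; [rewrite eq_sym | apply: contraNneq a_p => <-].
rewrite rcons_path; apply/andP; split.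
  apply: sub_in_path p_a pb => c d ca da /andP[cd cdF].
  by rewrite /adj cd !inE cdF andbT /=; apply: ab_new.
move: la; rewrite /adj => /andP[la laF]; rewrite la !inE laF andbT /=.
apply/eqP => /set2_inj[[_ ba] | [lb _]]; first by rewrite ba eqxx in ab.
case: p {pb a_p p_a la laF} s_gt2 b_p lb => // c p _ b_p /= lb.
by move: b_p; rewrite -lb mem_last.
Qed.

Lemma unconnected_neq F x y : ~~ connect (adj F) x y -> x != y.
Proof. by apply: contraNneq => ->; apply: connect0. Qed.

Lemma unconnected_edge_notin F x y : ~~ connect (adj F) x y -> [set x; y] \notin F.
Proof.
move=> nxy; have xy := unconnected_neq nxy.
by apply: contra nxy => xyF; apply: connect1; rewrite /adj xy.
Qed.

Lemma acyclic_setU1 F x y :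
  acyclicb F -> ~~ connect (adj F) x y -> acyclicb (F :|: [set [set x; y]]).
Proof.
move=> /acyclic_bridgeP hF nxy; have xyF := unconnected_edge_notin nxy.
apply/acyclic_bridgeP => u v uv; rewrite in_setU in_set1 => /orP[uvF|/eqP uv_xy]; last first.
  rewrite uv_xy setUC setU1K //.
  by case/set2_inj: uv_xy => -[-> ->]; rewrite // connect_adj_sym.
have -> : (F :|: [set [set x; y]]) :\ [set u; v] = (F :\ [set u; v]) :|: [set [set x; y]].
  rewrite setDUl; congr (_ :|: _); apply/setDidPl; rewrite disjoints1 in_set1.
  by apply: contraNneq xyF => ->.
rewrite connect_setU1 (negbTE (hF u v uv uvF)) /=.
have FuvF : F :\ [set u; v] \subset F by apply: subsetDl.
have Fuv : connect (adj F) u v by apply: connect1; rewrite /adj uv.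
apply: contra nxy => /orP[] /andP[/(connect_adjS FuvF) h1 /(connect_adjS FuvF) h2].
  rewrite connect_adj_sym in h1; rewrite connect_adj_sym in h2.
  exact: connect_trans h1 (connect_trans Fuv h2).
rewrite connect_adj_sym in Fuv.
exact: connect_trans h2 (connect_trans Fuv h1).
Qed.

End Graph.

Definition component n (F : {set {set 'I_n}}) (x : 'I_n) : {set 'I_n} :=
  [set y | connect (adj F) x y].

Definition components n (F : {set {set 'I_n}}) : {set {set 'I_n}} :=
  [set component F x | x : 'I_n].

Definition prod_card_components n (F : {set {set 'I_n}}) : nat :=
  \prod_(C in components F) #|C|.

Section Components.
Variable n : nat.
Implicit Types (F G : {set {set 'I_n}}) (x y z : 'I_n).

Lemma mem_component F x : x \in component F x.
Proof. by rewrite inE connect0. Qed.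

Lemma card_component_gt0 F x : 0 < #|component F x|.
Proof. by apply/card_gt0P; exists x; apply: mem_component. Qed.

Lemma component_eq F x y : (component F x == component F y) = connect (adj F) x y.
Proof.
apply/eqP/idP => [Fxy | xy]; first by have := mem_component F y; rewrite -Fxy inE.
by apply/setP => w; rewrite !inE (same_connect (connect_adj_sym F) xy).
Qed.

Lemma disjoint_components F x y :
  ~~ connect (adj F) x y -> [disjoint component F x & component F y].
Proof.
move=> nxy; apply/pred0P => w /=; rewrite !inE; apply: contraNF nxy => /andP[xw yw].
by rewrite (connect_trans xw) // connect_adj_sym.
Qed.

Lemma componentU_notin F x y : ~~ connect (adj F) x y ->
  component F x :|: component F y \notin components F.
Proof.
move=> nxy; apply/negP => /imsetP[z _ zE].
have : x \in component F z by rewrite -zE inE mem_component.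
have : y \in component F z by rewrite -zE inE mem_component orbT.
rewrite !inE => zy; rewrite connect_adj_sym => zx.
by rewrite (connect_trans zx zy) in nxy.
Qed.

Lemma component_setU1 F x y z : ~~ connect (adj F) x y ->
  component (F :|: [set [set x; y]]) z =
  if connect (adj F) z x || connect (adj F) z y
  then component F x :|: component F y else component F z.
Proof.
move=> nxy; apply/setP => w.
case zx: (connect (adj F) z x); case zy: (connect (adj F) z y);
  rewrite /= !inE connect_setU1 zx zy /=.
- by move: nxy; rewrite -(same_connect (connect_adj_sym F) zx) zy.
- by rewrite (same_connect (connect_adj_sym F) zx); case: (connect _ x w); case: (connect _ y w).
- by rewrite (same_connect (connect_adj_sym F) zy) orbC.
- by rewrite orbF.
Qed.

Lemma components_setU1 F x y : ~~ connect (adj F) x y ->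
  components (F :|: [set [set x; y]]) =
  (component F x :|: component F y) |: (components F :\ component F x :\ component F y).
Proof.
move=> nxy; apply/setP => C; rewrite !inE.
apply/imsetP/idP => [[z _ ->]|].
  rewrite component_setU1 //; case: ifP => [_|]; first by rewrite eqxx.
  move/negbT; rewrite negb_or => /andP[nzx nzy].
  by rewrite imset_f // !component_eq nzx nzy orbT.
case/orP => [/eqP ->|/and3P[Cy Cx /imsetP[z _ Cz]]].
  by exists x => //; rewrite component_setU1 // connect0.
exists z => //; rewrite component_setU1 // Cz; case: ifP => // /orP[] zE.
  by move: Cx; rewrite Cz component_eq zE.
by move: Cy; rewrite Cz component_eq zE.
Qed.

Lemma card_components_setU1 F x y : ~~ connect (adj F) x y ->
  #|components (F :|: [set [set x; y]])|.+1 = #|components F|.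
Proof.
move=> nxy; rewrite components_setU1 // cardsU1 !inE (negbTE (componentU_notin nxy)) !andbF /=.
rewrite (cardsD1 (component F x) (components F)) (cardsD1 (component F y)).
by rewrite !inE !imset_f // component_eq connect_adj_sym (negbTE nxy).
Qed.

Lemma prod_card_components_setU1 F x y : ~~ connect (adj F) x y ->
  prod_card_components (F :|: [set [set x; y]]) * (#|component F x| * #|component F y|) =
  prod_card_components F * (#|component F x| + #|component F y|).
Proof.
move=> nxy; rewrite /prod_card_components components_setU1 // big_setU1 /=; last first.
  by rewrite !inE (negbTE (componentU_notin nxy)) !andbF.
rewrite [in RHS](big_setD1 (component F x)) ?imset_f //.
rewrite [in RHS](big_setD1 (component F y)) /=; last first.
  by rewrite !inE component_eq connect_adj_sym (negbTE nxy) imset_f.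
rewrite cardsU (disjoint_setI0 (disjoint_components nxy)) cards0 subn0.
by set P := \prod_(_ in _) _; ring.
Qed.

End Components.

Section Forests.
Variable n : nat.
Implicit Types (F G : {set {set 'I_n}}) (x y : 'I_n).

Lemma KedgesP (e : {set 'I_n}) :
  reflect (exists x y, x != y /\ e = [set x; y]) (e \in Kedges n).
Proof. by rewrite inE subsetT; apply: cards2P. Qed.

Lemma component_set0 x : component set0 x = [set x].
Proof.
apply/setP => y; rewrite !inE; apply/idP/eqP => [|->]; last exact: connect0.
by move: y; apply: connect_ind => // u v _; rewrite /adj inE andbF.
Qed.

Lemma card_components_set0 : #|components (set0 : {set {set 'I_n}})| = n.
Proof.
rewrite /components (eq_imset _ component_set0) card_imset ?cardsT ?card_ord //.
exact: set1_inj.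
Qed.

Lemma prod_card_components_set0 : prod_card_components (set0 : {set {set 'I_n}}) = 1.
Proof.
by rewrite /prod_card_components big1 // => C /imsetP[x _ ->]; rewrite component_set0 cards1.
Qed.

Lemma card_components_forest F :
  acyclicb F -> F \subset Kedges n -> #|components F| + #|F| = n.
Proof.
move Fm: #|F| => m; elim: m F Fm => [|m IH] F Fm F_acyclic FK.
  by rewrite (cards0_eq Fm) card_components_set0 addn0.
have [e eF] : exists e, e \in F by apply/set0Pn; rewrite -card_gt0 Fm.
have /KedgesP[x [y [xy exy]]] := subsetP FK _ eF; subst e.
set F' := F :\ [set x; y].
have nxy := acyclic_bridgeP _ F_acyclic x y xy eF.
have F'm : #|F'| = m by move: Fm; rewrite (cardsD1 [set x; y] F) eF => -[].
have := IH F' F'm (acyclicS (subsetDl _ _) F_acyclic) (subset_trans (subsetDl _ _) FK).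
by rewrite -(setD1K eF) setUC -(card_components_setU1 nxy) addSnnS.
Qed.

Lemma card_components_setU_forest G1 G2 : [disjoint G1 & G2] ->
  acyclicb (G1 :|: G2) -> G1 :|: G2 \subset Kedges n ->
  #|components (G1 :|: G2)| + n = #|components G1| + #|components G2|.
Proof.
move=> G12 G12_acyclic G12K; move: (G12K); rewrite subUset => /andP[G1K G2K].
have := card_components_forest G12_acyclic G12K.
have := card_components_forest (acyclicS (subsetUl _ _) G12_acyclic) G1K.
have := card_components_forest (acyclicS (subsetUr _ _) G12_acyclic) G2K.
by rewrite cardsU (disjoint_setI0 G12) cards0 subn0; lia.
Qed.

End Forests.

Definition ntrees_over n (F : {set {set 'I_n}}) : nat :=
  #|[set T in spanning_trees n | F \subset T]|.

Section SpanningTrees.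
Variables (n : nat) (x0 : 'I_n).
Implicit Types (E F T : {set {set 'I_n}}) (x y : 'I_n).

Lemma components_connected T : connectedb T -> components T = [set setT].
Proof.
move=> T_conn; have compT x : component T x = setT.
  by apply/setP => y; rewrite !inE; apply: (forallP (forallP T_conn x) y).
apply/setP => C; rewrite inE; apply/imsetP/eqP => [[z _ ->]|->]; first exact: compT.
by exists x0; rewrite ?compT.
Qed.

Lemma connected_components1 F : #|components F| = 1 -> connectedb F.
Proof.
case/eqP/cards1P => C FC; apply/forallP => x; apply/forallP => y.
have : component F x \in components F by apply: imset_f.
have : component F y \in components F by apply: imset_f.
rewrite FC !inE => /eqP Cy /eqP Cx.
by have := mem_component F y; rewrite Cy -Cx inE.
Qed.

Lemma card_spanning_tree T : T \in spanning_trees n -> #|T|.+1 = n.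
Proof.
rewrite inE => /and3P[TK T_conn T_acyclic].
by have := card_components_forest T_acyclic TK; rewrite components_connected // cards1.
Qed.

Lemma ntrees_over_spanning_tree F : F \in spanning_trees n -> ntrees_over F = 1.
Proof.
move=> F_tree; apply/eqP/cards1P; exists F; apply/setP => T; rewrite !inE.
apply/andP/eqP => [[T_tree FT]|->]; last by move: F_tree; rewrite inE => ->.
have {}T_tree : T \in spanning_trees n by rewrite inE.
apply/eqP; rewrite eq_sym eqEcard FT /=.
by rewrite -ltnS (card_spanning_tree T_tree) (card_spanning_tree F_tree).
Qed.

Lemma ntrees_over_cyclic F : ~~ acyclicb F -> ntrees_over F = 0.
Proof.
move=> F_cyclic; apply/eqP; rewrite cards_eq0; apply/eqP/setP => T; rewrite !inE.
by apply: contraNF F_cyclic => /andP[/and3P[_ _ T_acyclic] FT]; apply: acyclicS T_acyclic.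
Qed.

Lemma card_ordered_edges E : E \subset Kedges n ->
  #|[set p : 'I_n * 'I_n | (p.1 != p.2) && ([set p.1; p.2] \in E)]| = 2 * #|E|.
Proof.
move=> EK; rewrite -sum1_card.
rewrite (partition_big (fun p : 'I_n * 'I_n => [set p.1; p.2]) (mem E)) /=; last first.
  by move=> p; rewrite inE => /andP[].
rewrite mulnC -sum_nat_const; apply: eq_bigr => e eE.
have /KedgesP[x [y [xy e_xy]]] := subsetP EK _ eE; subst e.
rewrite sum1dep_card.
have -> : [set p : 'I_n * 'I_n | (p \in [set p | (p.1 != p.2) && ([set p.1; p.2] \in E)])
            && ([set p.1; p.2] == [set x; y])] = [set (x, y); (y, x)].
  apply/setP => -[u v]; rewrite !inE /=; apply/idP/idP.
    by case/andP=> /andP[uv _] /eqP/set2_inj[[-> ->]|[-> ->]]; rewrite eqxx ?orbT.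
  case/orP => /eqP[-> ->]; rewrite ?xy ?eqxx ?andbT ?eE //.
  by rewrite eq_sym xy setUC eqxx andbT.
by rewrite cards2; case: eqP => // -[xy_eq _]; rewrite xy_eq eqxx in xy.
Qed.

Lemma ntrees_over_double_count F k :
  acyclicb F -> F \subset Kedges n -> #|components F| = k.+2 ->
  2 * (ntrees_over F * k.+1) =
  \sum_(p : 'I_n * 'I_n | ~~ connect (adj F) p.1 p.2) ntrees_over (F :|: [set [set p.1; p.2]]).
Proof.
move=> F_acyclic FK F_comp.
set S := [set T in spanning_trees n | F \subset T].
have card_new T : T \in S -> #|T :\: F| = k.+1.
  rewrite inE => /andP[T_tree FT].
  have := card_spanning_tree T_tree; have := card_components_forest F_acyclic FK.
  by rewrite cardsD (setIidPr FT) F_comp; lia.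
have -> : ntrees_over F * k.+1 = \sum_(T in S) #|T :\: F|.
  by rewrite -sum_nat_const; apply: eq_bigr => T /card_new.
rewrite big_distrr /=.
under eq_bigr => T.
  rewrite inE => /andP[T_tree _].
  have TK : T :\: F \subset Kedges n.
    by apply: subset_trans (subsetDl _ _) _; move: T_tree; rewrite inE => /andP[].
  rewrite -(card_ordered_edges TK) -sum1dep_card big_mkcond.
  over.
rewrite exchange_big /= [RHS]big_mkcond /=; apply: eq_bigr => -[u v] _ /=.
have [Fuv|nuv] := boolP (connect (adj F) u v).
  apply: big1 => T; rewrite inE => /andP[T_tree FT]; rewrite !inE.
  case: ifP => // /andP[uv /andP[uvF uvT]]; move: T_tree; rewrite inE => /and3P[_ _].
  apply: contraTeq => _; apply: contra (connect_not_acyclic_setU1 uv Fuv uvF).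
  by apply: acyclicS; rewrite subUset FT sub1set.
rewrite /= /ntrees_over -sum1dep_card big_mkcond [RHS]big_mkcond /=.
apply: eq_bigr => T _.
rewrite !inE subUset sub1set (unconnected_neq nuv) (negbTE (unconnected_edge_notin nuv)) /=.
by case: [&& _, _ & _]; case: (F \subset T); case: ([set u; v] \in T).
Qed.

End SpanningTrees.

Section ForestFormula.
Local Open Scope ring_scope.
Variables (n : nat) (x0 : 'I_n).
Implicit Types (F T : {set {set 'I_n}}) (x y : 'I_n).

Lemma card_component_neq0 F x : #|component F x|%:R != 0 :> rat.
Proof. by rewrite pnatr_eq0 -lt0n card_component_gt0. Qed.

Lemma sum_inv_card_component F :
  \sum_x (#|component F x|%:R : rat)^-1 = #|components F|%:R.
Proof.
rewrite (partition_big_imset (component F)) /= -sum1_card natr_sum.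
apply: eq_bigr => C /imsetP[z _ ->].
rewrite (eq_bigr (fun _ => (#|component F z|%:R : rat)^-1)); last by move=> x /eqP ->.
rewrite sumr_const.
have -> : #|[pred x | component F x == component F z]| = #|component F z|.
  by apply: eq_card => x; rewrite !inE component_eq connect_adj_sym.
by rewrite -[_ *+ _]mulr_natl mulfV ?card_component_neq0.
Qed.

Lemma sum_inv_card_components_unconnected F k : #|components F| = k.+1 ->
  \sum_(p : 'I_n * 'I_n | ~~ connect (adj F) p.1 p.2)
     ((#|component F p.1|%:R : rat)^-1 + (#|component F p.2|%:R)^-1) = 2 * n%:R * k%:R.
Proof.
move=> F_comp; rewrite big_split /=.
have swap : \sum_(p : 'I_n * 'I_n | ~~ connect (adj F) p.1 p.2) (#|component F p.2|%:R : rat)^-1 =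
            \sum_(p : 'I_n * 'I_n | ~~ connect (adj F) p.1 p.2) (#|component F p.1|%:R)^-1.
  rewrite (reindex_inj (h := fun p : 'I_n * 'I_n => (p.2, p.1))) /=.
    by apply: eq_bigl => p; rewrite connect_adj_sym.
  by move=> [a b] [c d] [-> ->].
rewrite swap.
suff -> : \sum_(p : 'I_n * 'I_n | ~~ connect (adj F) p.1 p.2) (#|component F p.1|%:R : rat)^-1
    = n%:R * k%:R by ring.
have row x : \sum_(y | ~~ connect (adj F) x y) (#|component F x|%:R : rat)^-1
             = n%:R * (#|component F x|%:R)^-1 - 1.
  rewrite sumr_const -[_ *+ _]mulr_natl.
  have -> : #|[pred y | ~~ connect (adj F) x y]| = #|~: component F x|.
    by apply: eq_card => y; rewrite !inE.
  have -> : (#|~: component F x|%:R : rat) = n%:R - #|component F x|%:R.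
    by apply/eqP; rewrite eq_sym subr_eq -natrD addnC cardsC card_ord.
  by rewrite mulrBl mulfV ?card_component_neq0 // addrC.
transitivity (\sum_x \sum_(y | ~~ connect (adj F) x y) (#|component F x|%:R : rat)^-1).
  by rewrite pair_big_dep; apply: eq_bigl.
rewrite (eq_bigr _ (fun x _ => row x)) sumrB -mulr_sumr sum_inv_card_component F_comp.
by rewrite sumr_const card_ord -mulr_natl mulr1 -addn1 natrD; ring.
Qed.

Lemma ntrees_over_forest F : acyclicb F -> F \subset Kedges n ->
  (ntrees_over F * n ^ 2 = n ^ #|components F| * prod_card_components F)%N.
Proof.
have : (0 < #|components F|)%N by apply/card_gt0P; exists (component F x0); apply: imset_f.
case F_comp: #|components F| => [//|k] _.
elim: k F F_comp => [|k IH] F F_comp F_acyclic FK.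
  have F_conn := connected_components1 F_comp.
  have F_tree : F \in spanning_trees n by rewrite inE FK F_conn.
  rewrite ntrees_over_spanning_tree // /prod_card_components components_connected //.
  by rewrite big_set1 cardsT card_ord mul1n expn1.
apply/eqP; rewrite -(eqr_nat rat) natrM (natrX _ n 2) natrM natrX; apply/eqP.
have new_edge (p : 'I_n * 'I_n) : ~~ connect (adj F) p.1 p.2 ->
    (ntrees_over (F :|: [set [set p.1; p.2]]))%:R * n%:R ^+ 2 =
    n%:R ^+ k.+1 * (prod_card_components F)%:R *
      ((#|component F p.1|%:R : rat)^-1 + (#|component F p.2|%:R)^-1).
  case: p => u v /= nuv.
  rewrite -natrX -natrM IH; first last.
  - rewrite subUset FK sub1set; apply/KedgesP; exists u, v.
    by rewrite (unconnected_neq nuv).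
  - exact: acyclic_setU1.
  - by apply/eqP; rewrite -eqSS (card_components_setU1 nuv) F_comp.
  rewrite natrM natrX -mulrA; congr (_ * _).
  have := congr1 (fun m => m%:R : rat) (prod_card_components_setU1 nuv).
  rewrite /= !natrM natrD => prodE.
  apply: (mulIf (mulf_neq0 (card_component_neq0 F u) (card_component_neq0 F v))).
  by rewrite prodE; field; rewrite !card_component_neq0.
have := congr1 (fun m => m%:R * n%:R ^+ 2 : rat)
                (ntrees_over_double_count x0 F_acyclic FK F_comp).
rewrite /= natr_sum mulr_suml (eq_bigr _ new_edge) -mulr_sumr.
rewrite (sum_inv_card_components_unconnected (k := k.+1)) // => double_count.
have k_neq0 : (2 * k.+1%:R : rat) != 0 by rewrite mulf_neq0 // pnatr_eq0.
apply: (mulfI k_neq0).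
transitivity ((2 * (ntrees_over F * k.+1))%:R * n%:R ^+ 2 : rat); first by rewrite !natrM; ring.
by rewrite double_count !exprS; ring.
Qed.

End ForestFormula.

Section Supports.
Variable n : nat.
Implicit Types (A B S : {set 'I_n}) (G : {set {set 'I_n}}) (x y u v : 'I_n).

Lemma binom2S A B : A \subset B -> binom2 A \subset binom2 B.
Proof.
by move=> AB; apply/subsetP => e; rewrite !inE => /andP[eA ->]; rewrite (subset_trans eA AB).
Qed.

Lemma disjoint_binom2 A B : [disjoint A & B] -> [disjoint binom2 A & binom2 B].
Proof.
move=> AB; apply/pred0P => e /=; rewrite !inE.
apply/negP => /andP[/andP[/subsetP eA /eqP e2] /andP[/subsetP eB _]].
have /card_gt0P[x xe] : 0 < #|e| by rewrite e2.
by have := eB x xe; rewrite (disjointFr AB (eA x xe)).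
Qed.

Lemma adj_binom2 S G u v : G \subset binom2 S -> adj G u v -> (u \in S) && (v \in S).
Proof.
move=> GS /andP[_ /(subsetP GS)]; rewrite inE => /andP[/subsetP uvS _].
by rewrite !uvS // !inE eqxx ?orbT.
Qed.

Lemma connect_binom2 S G x y : G \subset binom2 S -> x \in S -> connect (adj G) x y -> y \in S.
Proof. by move=> GS xS; move: y; apply: connect_ind => // u v _ /(adj_binom2 GS)/andP[]. Qed.

Lemma component_binom2_notin S G x : G \subset binom2 S -> x \notin S -> component G x = [set x].
Proof.
move=> GS xS; apply/setP => y; rewrite !inE; apply/idP/eqP => [|->]; last exact: connect0.
move: y; apply: connect_ind => // u v -> /(adj_binom2 GS)/andP[uS _].
by rewrite uS in xS.
Qed.

Lemma mem_binom2_component S G x : G \subset binom2 S -> 1 < #|component G x| -> x \in S.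
Proof.
by move=> GS; apply: contraTT => xS; rewrite (component_binom2_notin GS xS) cards1.
Qed.

Section TwoSupports.
Variables (S1 S2 : {set 'I_n}) (G1 G2 : {set {set 'I_n}}).
Hypotheses (S12 : [disjoint S1 & S2]) (G1S1 : G1 \subset binom2 S1) (G2S2 : G2 \subset binom2 S2).

Lemma connect_setU_binom2 x y : x \in S1 ->
  connect (adj (G1 :|: G2)) x y = connect (adj G1) x y.
Proof.
move=> xS1; apply/idP/idP => [xy|]; last exact/connect_adjS/subsetUl.
suff [] : (y \in S1) /\ connect (adj G1) x y by [].
move: y xy; apply: (connect_ind (P := fun y => (y \in S1) /\ connect (adj G1) x y)).
  by rewrite xS1 connect0.
move=> u v [uS1 xu] /andP[uv].
rewrite in_setU => /orP[uvG1|uvG2].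
  have G1uv : adj G1 u v by rewrite /adj uv uvG1.
  by case/andP: (adj_binom2 G1S1 G1uv) => _ ->; split=> //; apply: connect_trans xu (connect1 G1uv).
have /andP[uS2 _] : (u \in S2) && (v \in S2) by apply: (adj_binom2 G2S2); rewrite /adj uv uvG2.
by rewrite (disjointFr S12 uS1) in uS2.
Qed.

Lemma component_setU_binom2 x : x \in S1 -> component (G1 :|: G2) x = component G1 x.
Proof. by move=> xS1; apply/setP => y; rewrite !inE connect_setU_binom2. Qed.

End TwoSupports.

Lemma bridge_setU_binom2 S1 S2 G1 G2 u v : [disjoint S1 & S2] ->
  G1 \subset binom2 S1 -> G2 \subset binom2 S2 ->
  acyclicb G1 -> u != v -> [set u; v] \in G1 ->
  ~~ connect (adj ((G1 :|: G2) :\ [set u; v])) u v.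
Proof.
move=> S12 G1S1 G2S2 G1_acyclic uv uvG1.
have uvS1 := subsetP G1S1 _ uvG1.
have uS1 : u \in S1 by move: uvS1; rewrite inE => /andP[/subsetP -> //]; rewrite !inE eqxx.
rewrite setDUl; have -> : G2 :\ [set u; v] = G2.
  apply/setDidPl; rewrite disjoint_sym disjoints1; apply: contraL uvS1 => /(subsetP G2S2).
  by move=> uvS2; rewrite (disjointFl (disjoint_binom2 S12) uvS2).
rewrite (connect_setU_binom2 S12 (subset_trans (subsetDl _ _) G1S1) G2S2 _ uS1).
exact: (acyclic_bridgeP _ G1_acyclic u v uv uvG1).
Qed.

Lemma acyclic_setU_binom2 S1 S2 G1 G2 : [disjoint S1 & S2] ->
  G1 \subset binom2 S1 -> G2 \subset binom2 S2 ->
  acyclicb G1 -> acyclicb G2 -> acyclicb (G1 :|: G2).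
Proof.
move=> S12 G1S1 G2S2 G1_acyclic G2_acyclic.
have S21 : [disjoint S2 & S1] by rewrite disjoint_sym.
apply/acyclic_bridgeP => u v uv; rewrite in_setU => /orP[uvG|uvG].
  exact: bridge_setU_binom2 S12 G1S1 G2S2 G1_acyclic uv uvG.
by rewrite setUC; apply: bridge_setU_binom2 S21 G2S2 G1S1 G2_acyclic uv uvG.
Qed.

Lemma prod_card_components_gt1 G :
  prod_card_components G = \prod_(C in components G | 1 < #|C|) #|C|.
Proof.
rewrite /prod_card_components big_mkcondr /=; apply: eq_bigr => C /imsetP[z _ ->].
case: ifP => // /negbT; rewrite -leqNgt => z_le1; apply/eqP.
by rewrite eqn_leq z_le1 card_component_gt0.
Qed.

Lemma prod_card_components_setU_binom2 S1 S2 G1 G2 : [disjoint S1 & S2] ->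
  G1 \subset binom2 S1 -> G2 \subset binom2 S2 ->
  prod_card_components (G1 :|: G2) = prod_card_components G1 * prod_card_components G2.
Proof.
move=> S12 G1S1 G2S2; rewrite !prod_card_components_gt1.
have S21 : [disjoint S2 & S1] by rewrite disjoint_sym.
have G12S : G1 :|: G2 \subset binom2 (S1 :|: S2).
  by rewrite subUset (subset_trans G1S1 (binom2S (subsetUl _ _)))
             (subset_trans G2S2 (binom2S (subsetUr _ _))).
set P1 := [pred C : {set 'I_n} | (C \in components G1) && (1 < #|C|)].
set P2 := [pred C : {set 'I_n} | (C \in components G2) && (1 < #|C|)].
rewrite (eq_bigl [predU P1 & P2]) => [|C]; last first.
  rewrite !inE /=; apply/andP/orP => [[/imsetP[z _ ->] z_gt1]|].
    have /setUP[zS|zS] := mem_binom2_component G12S z_gt1.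
      by left; rewrite (component_setU_binom2 S12 G1S1 G2S2 zS) in z_gt1 *; rewrite imset_f.
    right; rewrite setUC in z_gt1 *; rewrite (component_setU_binom2 S21 G2S2 G1S1 zS) in z_gt1 *.
    by rewrite imset_f.
  case=> /andP[/imsetP[z _ ->] z_gt1]; split=> //.
    by rewrite -(component_setU_binom2 S12 G1S1 G2S2 (mem_binom2_component G1S1 z_gt1)) imset_f.
  rewrite setUC -(component_setU_binom2 S21 G2S2 G1S1 (mem_binom2_component G2S2 z_gt1)).
  by rewrite imset_f.
rewrite bigU //; apply/pred0P => C /=; apply/negP => /andP[].
rewrite !inE => /andP[/imsetP[z1 _ ->] z1_gt1] /andP[/imsetP[z2 _ z12] z2_gt1].
have z1S1 := mem_binom2_component G1S1 z1_gt1.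
rewrite z12 in z2_gt1.
have : z1 \in component G2 z2 by rewrite -z12 mem_component.
rewrite inE => /(connect_binom2 G2S2 (mem_binom2_component G2S2 z2_gt1)).
by rewrite (disjointFr S12 z1S1).
Qed.

End Supports.

Section Independence.
Variable n : nat.
Implicit Types (S : {set 'I_n}) (G : {set {set 'I_n}}).

Lemma ntrees_over_set0 : ntrees_over (set0 : {set {set 'I_n}}) = #|spanning_trees n|.
Proof. by apply: eq_card => T; rewrite !inE sub0set andbT. Qed.

Lemma ntrees_over_setU_binom2 S1 S2 G1 G2 : [disjoint S1 & S2] ->
  G1 \subset binom2 S1 -> G2 \subset binom2 S2 ->
  ntrees_over (G1 :|: G2) * #|spanning_trees n| = ntrees_over G1 * ntrees_over G2.
Proof.
move=> S12 G1S1 G2S2; rewrite -ntrees_over_set0.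
(* Without vertices the forest formula fails (0 ^ 0 = 1), but G1 = G2 = set0. *)
have [x0 _ | no_vertex] := pickP (@predT 'I_n); last first.
  have no_edge S G : G \subset binom2 S -> G = set0.
    move=> GS; apply/setP => e; rewrite inE; apply/negbTE/negP => /(subsetP GS).
    by rewrite inE => /andP[_ /cards2P[x _]]; have := no_vertex x.
  by rewrite (no_edge _ _ G1S1) (no_edge _ _ G2S2) setU0.
have [G1_acyclic|G1_cyclic] := boolP (acyclicb G1); last first.
  have G12_cyclic : ~~ acyclicb (G1 :|: G2) by apply: contra G1_cyclic; apply/acyclicS/subsetUl.
  by rewrite (ntrees_over_cyclic G1_cyclic) (ntrees_over_cyclic G12_cyclic).
have [G2_acyclic|G2_cyclic] := boolP (acyclicb G2); last first.
  have G12_cyclic : ~~ acyclicb (G1 :|: G2) by apply: contra G2_cyclic; apply/acyclicS/subsetUr.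
  by rewrite (ntrees_over_cyclic G2_cyclic) (ntrees_over_cyclic G12_cyclic) muln0.
have G12_acyclic := acyclic_setU_binom2 S12 G1S1 G2S2 G1_acyclic G2_acyclic.
have G1K := subset_trans G1S1 (binom2S (subsetT S1)).
have G2K := subset_trans G2S2 (binom2S (subsetT S2)).
have G12K : G1 :|: G2 \subset Kedges n by rewrite subUset G1K G2K.
have G12 : [disjoint G1 & G2] by apply: disjointWl G1S1 (disjointWr G2S2 (disjoint_binom2 S12)).
have n_gt0 : 0 < n by apply: leq_ltn_trans (ltn_ord x0).
apply/eqP; rewrite -(@eqn_pmul2r (n ^ 2 * n ^ 2)) ?muln_gt0 ?expn_gt0 ?n_gt0 //; apply/eqP.
have set0_acyclic : acyclicb (set0 : {set {set 'I_n}}) := acyclicS (sub0set _) G1_acyclic.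
rewrite [LHS]mulnACA [RHS]mulnACA.
rewrite (ntrees_over_forest x0 G12_acyclic G12K) (ntrees_over_forest x0 set0_acyclic (sub0set _)).
rewrite (ntrees_over_forest x0 G1_acyclic G1K) (ntrees_over_forest x0 G2_acyclic G2K).
rewrite (prod_card_components_setU_binom2 S12 G1S1 G2S2).
rewrite prod_card_components_set0 card_components_set0.
by rewrite muln1 mulnAC -expnD card_components_setU_forest // expnD mulnACA.
Qed.

End Independence.

Lemma card_setI_pred_natr (R : pzSemiRingType) (X : finType) (A : {set X}) (P : pred X) :
  (#|[set x in A | P x]|%:R = \sum_(x in A) (P x)%:R :> R)%R.
Proof.
rewrite -sum1dep_card natr_sum big_mkcond [RHS]big_mkcond /=; apply: eq_bigr => x _.
by case: (x \in A); case: (P x).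
Qed.

Section SubsetIntervals.
Local Open Scope ring_scope.
Variables (R : pzRingType) (X : finType).
Implicit Types A B C T : {set X}.

Lemma sum_sign_subset_interval A B : A \subset B ->
  \sum_(C : {set X} | (A \subset C) && (C \subset B)) (-1) ^+ #|C :\: A| = (A == B)%:R :> R.
Proof.
move=> AB; have [BA|/subsetPn[z zB zA]] := boolP (B \subset A).
  have <- : A = B by apply/eqP; rewrite eqEsubset AB BA.
  rewrite eqxx (big_pred1 A) ?setDv ?cards0 ?expr0 // => C /=.
  by rewrite -eqEsubset eq_sym.
have -> : (A == B) = false by apply: contraNF zA => /eqP->.
rewrite (bigID [pred C : {set X} | z \in C]) /=.
rewrite (reindex_onto (fun C => z |: C) (fun C => C :\ z)) /=; last first.
  by move=> C /andP[_ z_C]; rewrite setD1K.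
set P := fun C : {set X} => (A \subset C) && (C \subset B) && (z \notin C).
rewrite [Y in _ + Y](eq_bigl P) //.
rewrite (eq_big P (fun C => - (-1) ^+ #|C :\: A|)) ?sumrN ?addNr // => C.
  rewrite /P in_setU1 eqxx /= andbT subUset sub1set zB /=.
  have [z_C|z_C] := boolP (z \in C).
    rewrite andbF; apply/negbTE/negP => /andP[_ /eqP zC_eq].
    by have := setD11 z (z |: C); rewrite zC_eq z_C.
  rewrite setU1K // eqxx !andbT; congr (_ && _).
  apply/idP/idP => subAC; apply/subsetP => w wA; last by rewrite in_setU1 (subsetP subAC w wA) orbT.
  by have := subsetP subAC w wA; rewrite in_setU1 => /orP[/eqP wz|//]; rewrite -wz wA in zA.
move=> /andP[_ /eqP zC_eq].
have z_C : z \notin C by apply/negP => z_C; have := setD11 z (z |: C); rewrite zC_eq z_C.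
rewrite setDUl (_ : [set z] :\: A = [set z]); last first.
  by apply/setP => w; rewrite !inE; case: (w =P z) => [->|]; rewrite ?andbF ?andbT ?zA.
by rewrite cardsU1 !inE (negbTE z_C) andbF /= add1n exprS mulN1r.
Qed.

Lemma setI_eq_moebius T B A :
  (T :&: B == A)%:R =
  \sum_(C : {set X} | (A \subset C) && (C \subset B)) (-1) ^+ #|C :\: A| * (C \subset T)%:R :> R.
Proof.
symmetry.
transitivity (\sum_(C : {set X} | (A \subset C) && (C \subset B :&: T)) (-1) ^+ #|C :\: A| : R).
  rewrite big_mkcond [RHS]big_mkcond; apply: eq_bigr => C _; rewrite subsetI.
  by case: (A \subset C); case: (C \subset B); case: (C \subset T); rewrite /= ?mulr1 ?mulr0.
have [ABT|nABT] := boolP (A \subset B :&: T).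
  by rewrite sum_sign_subset_interval // setIC eq_sym.
rewrite big_pred0 => [|C]; last by apply: contraNF nABT => /andP[]; apply: subset_trans.
by case: eqP nABT => // <-; rewrite setIC subxx.
Qed.

End SubsetIntervals.

Section TreeCounts.
Local Open Scope ring_scope.
Variable n : nat.
Implicit Types (S : {set 'I_n}) (B F : {set {set 'I_n}}).

Lemma card_trees_setI_eq B F :
  #|[set T in spanning_trees n | T :&: B == F]|%:R =
  \sum_(G : {set {set 'I_n}} | (F \subset G) && (G \subset B))
    (-1) ^+ #|G :\: F| * (ntrees_over G)%:R :> rat.
Proof.
rewrite card_setI_pred_natr.
under [RHS]eq_bigr do rewrite /ntrees_over card_setI_pred_natr mulr_sumr.
by rewrite exchange_big /=; apply: eq_bigr => T _; apply: setI_eq_moebius.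
Qed.

Lemma card_trees_setI_eq2 B1 B2 F1 F2 :
  #|[set T in spanning_trees n | (T :&: B1 == F1) && (T :&: B2 == F2)]|%:R =
  \sum_(G1 : {set {set 'I_n}} | (F1 \subset G1) && (G1 \subset B1))
  \sum_(G2 : {set {set 'I_n}} | (F2 \subset G2) && (G2 \subset B2))
    (-1) ^+ #|G1 :\: F1| * (-1) ^+ #|G2 :\: F2| * (ntrees_over (G1 :|: G2))%:R :> rat.
Proof.
rewrite card_setI_pred_natr.
under eq_bigr do rewrite -mulnb natrM (setI_eq_moebius _ _ B1) (setI_eq_moebius _ _ B2) big_distrlr.
rewrite exchange_big /=; apply: eq_bigr => G1 _.
rewrite exchange_big /=; apply: eq_bigr => G2 _.
rewrite /ntrees_over card_setI_pred_natr mulr_sumr; apply: eq_bigr => T _.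
by rewrite subUset; case: (G1 \subset T); case: (G2 \subset T); rewrite /= ?mulr1 ?mulr0 ?mul0r.
Qed.

Lemma card_trees_binom2_indep S1 S2 F1 F2 : [disjoint S1 & S2] ->
  (#|[set T in spanning_trees n | (T :&: binom2 S1 == F1) && (T :&: binom2 S2 == F2)]|
     * #|spanning_trees n| =
   #|[set T in spanning_trees n | T :&: binom2 S1 == F1]|
     * #|[set T in spanning_trees n | T :&: binom2 S2 == F2]|)%N.
Proof.
move=> S12; apply/eqP; rewrite -(eqr_nat rat); apply/eqP.
rewrite natrM [RHS]natrM card_trees_setI_eq2 !card_trees_setI_eq.
rewrite mulr_suml big_distrlr /=; apply: eq_bigr => G1 /andP[_ G1S1].
rewrite mulr_suml; apply: eq_bigr => G2 /andP[_ G2S2].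
by rewrite -[LHS]mulrA -natrM (ntrees_over_setU_binom2 S12 G1S1 G2S2) natrM mulrACA.
Qed.

End TreeCounts.

Theorem lemma2p5 (n : nat) (S1 S2 : {set 'I_n}) (hdis : [disjoint S1 & S2])
    (F1 F2 : {set {set 'I_n}}) :
  Pr_ust (fun T => (T :&: binom2 S1 == F1) && (T :&: binom2 S2 == F2))
  = (Pr_ust (fun T => T :&: binom2 S1 == F1) * Pr_ust (fun T => T :&: binom2 S2 == F2))%R.
Proof.
have := congr1 (fun m => (m%:R : rat)%R) (card_trees_binom2_indep F1 F2 hdis).
rewrite /Pr_ust /= !natrM; set N := (#|spanning_trees n|%:R)%R => indep.
have [->|N_neq0] := eqVneq N 0%R; first by rewrite invr0 !mulr0.
by rewrite mulrACA -invfM -indep invfM mulrA mulfK.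
Qed.
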